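(* Let $F$ be the unique series in $\mathbb{Q}[x,\bar x,y,\bar y][[t]]$ satisfying $(1-St)F=\bar x\bar y-\bar x t[x^0]F-\bar y t[y^0]F$, and write $F(1,1,t)=\sum_{n\ge0}a_nt^n$ (so $a_n$ is the total number of $n$-step walks in the associated model). Then for all $n\ge0$, $$(n+2)(n+4)(n+6)(n^2+2n-1)\,a_{n+2}-4(n+3)(2n^3+9n^2+4n-18)\,a_{n+1}-16(n+1)(n+2)(n+3)(n^2+4n+2)\,a_n=0.$$
   Context: Notation: $\bar x=x^{-1}$, $\bar y=y^{-1}$, $S=x+y+\bar x+\bar y$; for $G=\sum c_{i,j,n}x^iy^jt^n$, $[x^0]G=\sum_{j,n}c_{0,j,n}y^jt^n$ and $[y^0]G=\sum_{i,n}c_{i,0,n}x^it^n$. $F$ counts walks in $\mathbb{Z}^2$ with unit steps $(\pm1,0),(0,\pm1)$ starting at $(-1,-1)$ that never take a west step from a point on the $y$-axis nor a south step from a point on the $x$-axis; $a_n$ is the number of such walks of length $n$. *)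

From HB Require Import structures.
From mathcomp Require Import all_boot all_order all_algebra.
Set Implicit Arguments. Unset Strict Implicit. Unset Printing Implicit Defensive.
Import Order.TTheory GRing.Theory Num.Theory.
Local Open Scope ring_scope.

(* Work over Q = rat.  A series G = \sum_n G_n t^n in Q[x,xbar,y,ybar][[t]]
   is encoded by its coefficient array: [Fcoef n i j] is the coefficient of
   x^i y^j t^n in F (i j : int).

   The functional equation  (1 - S t) F = xbar ybar - xbar t [x^0]F - ybar t [y^0]F
   is equivalent, coefficientwise in t, to
     F_0     = xbar ybar,
     F_{n+1} = S F_n - xbar [x^0]F_n - ybar [y^0]F_n ,
   which determines F uniquely.  Taking the coefficient of x^i y^j:
     [x^i y^j] (x F_n)    = F_n(i-1, j)
     [x^i y^j] (xbar F_n) = F_n(i+1, j)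
     [x^i y^j] (xbar [x^0]F_n) = (i == -1) * F_n(0, j)
     [x^i y^j] (ybar [y^0]F_n) = (j == -1) * F_n(i, 0). *)
Fixpoint Fcoef (n : nat) : int -> int -> rat :=
  match n with
  | 0 => fun i j => if (i == -1) && (j == -1) then 1 else 0
  | n'.+1 => fun i j =>
      Fcoef n' (i - 1) j + Fcoef n' (i + 1) j
      + Fcoef n' i (j - 1) + Fcoef n' i (j + 1)
      - (if i == -1 then Fcoef n' 0 j else 0)
      - (if j == -1 then Fcoef n' i 0 else 0)
  end.

(* a_n = [t^n] F(1,1,t): the sum of all coefficients of F_n.  F_n is a Laurent
   polynomial supported in the box |i|, |j| <= n+1 (start at (-1,-1), n unit
   steps), so summing over that box is the evaluation at x = y = 1. *)
Definition box (n : nat) (k : nat) : int := k%:Z - (n.+1)%:Z.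

Definition a (n : nat) : rat :=
  \sum_(k < (n.+1).*2.+1) \sum_(l < (n.+1).*2.+1) Fcoef n (box n k) (box n l).

From mathcomp Require Import all_boot all_order all_algebra.
From mathcomp Require Import ring zify.
Import GRing.Theory Num.Theory.
Local Open Scope ring_scope.

(* The model is solved by a reflection principle.
   - [line_walks n r], the number of n-step walks on Z with steps +-1 from 0
     to r, is even in r, vanishes for |r| > n and satisfies the ratio
     (n + r + 2) P(r + 2) = (n - r) P(r) (it is a binomial coefficient).
   - Rotating the plane by 45 degrees makes the two diagonal coordinates
     independent +-1 walks, so [plane_walks n p q := P(p + q) P(p - q)]
     counts unconstrained plane walks from the origin to (p, q).
   - With [reflect_diff g i := g |i+1| - g (|i+1| + 2)], the coefficient
     F_n(i, j) is the double reflection difference of [plane_walks n]: the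
     folding commutes with a step exactly up to the boundary terms of the
     functional equation ([reflect_diff_step]).
   - Summing a reflection difference over the support box telescopes, so a_n
     is a quadratic form in P(n, 0), ..., P(n, 4); by the ratio,
     a_n = alpha(n) P(n, 0)^2 + beta(n) P(n, 1)^2 in closed form.
   - Since P(n+1, 0) and P(n+1, 1) are explicit multiples of P(n, 1) and
     P(n, 0), the recurrence becomes a rational-function identity. *)

Section Reflection.
Context {V : zmodType}.

(* The reflection difference of g at i: the count g at distance |i + 1| from
   the start minus the count at the mirror image through the wall. *)
Definition reflect_diff (g : int -> V) (i : int) : V :=
  g `|i + 1| - g (`|i + 1| + 2).

(* Folding commutes with one horizontal step, the term at i = -1 being the
   forbidden west step from the y-axis; evenness of g absorbs the mirror. *)
Lemma reflect_diff_step (g : int -> V) : (forall p, g (- p) = g p) -> forall i,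
  reflect_diff g (i - 1) + reflect_diff g (i + 1)
    - (if i == -1 then reflect_diff g 0 else 0)
  = reflect_diff (fun p => g (p - 1) + g (p + 1)) i.
Proof.
move=> g_even i; rewrite /reflect_diff.
have [->|ne] := eqVneq i (-1).
  change (g 1 - g 3 + (g 1 - g 3) - (g 1 - g 3) = g (-1) + g 1 - (g 1 + g 3)).
  by rewrite addrK g_even addrKA.
rewrite subr0 subrK (_ : i + 1 + 1 = i + 2); last by lia.
rewrite (_ : `|i + 1| + 2 - 1 = `|i + 1| + 1); last by lia.
rewrite (_ : `|i + 1| + 2 + 1 = `|i + 1| + 1 + 2); last by lia.
have [[-> ->]|[-> ->]] : (`|i| = `|i + 1| - 1 /\ `|i + 2| = `|i + 1| + 1)
                   \/ (`|i| = `|i + 1| + 1 /\ `|i + 2| = `|i + 1| - 1).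
- by have [le0|lt0] := lerP 0 i; [left|right]; split; lia.
- by rewrite (_ : `|i + 1| - 1 + 2 = `|i + 1| + 1) ?subrKA ?addrKA //; lia.
- by rewrite (_ : `|i + 1| - 1 + 2 = `|i + 1| + 1) 1?addrC ?subrKA ?addrKA //; lia.
Qed.

Lemma reflect_diff_ext (g h : int -> V) (i : int) :
  (forall p, g p = h p) -> reflect_diff g i = reflect_diff h i.
Proof. by move=> egh; rewrite /reflect_diff !egh. Qed.

Lemma reflect_diffD (g h : int -> V) (i : int) :
  reflect_diff (fun p => g p + h p) i = reflect_diff g i + reflect_diff h i.
Proof. by rewrite /reflect_diff opprD addrACA. Qed.

Definition reflect_diff2 (G : int -> int -> V) (i j : int) : V :=
  reflect_diff (fun p => reflect_diff (G p) j) i.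

Lemma reflect_diff2_ext (G H : int -> int -> V) (i j : int) :
  (forall p q, G p q = H p q) -> reflect_diff2 G i j = reflect_diff2 H i j.
Proof. by move=> eGH; apply: reflect_diff_ext => p; apply: reflect_diff_ext. Qed.

Lemma reflect_diff2D (G H : int -> int -> V) (i j : int) :
  reflect_diff2 (fun p q => G p q + H p q) i j
  = reflect_diff2 G i j + reflect_diff2 H i j.
Proof.
by rewrite /reflect_diff2 -reflect_diffD; apply: reflect_diff_ext => p; apply: reflect_diffD.
Qed.

Lemma reflect_diff2_swap (G : int -> int -> V) (i j : int) :
  reflect_diff2 G i j = reflect_diff2 (fun q p => G p q) j i.
Proof. by rewrite /reflect_diff2 /reflect_diff !opprD !opprK addrACA. Qed.

Lemma reflect_diff2_stepx (G : int -> int -> V) :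
  (forall p q, G (- p) q = G p q) -> forall i j,
  reflect_diff2 G (i - 1) j + reflect_diff2 G (i + 1) j
    - (if i == -1 then reflect_diff2 G 0 j else 0)
  = reflect_diff2 (fun p q => G (p - 1) q + G (p + 1) q) i j.
Proof.
move=> G_even i j; rewrite /reflect_diff2 reflect_diff_step => [|p]; last first.
  by apply: reflect_diff_ext => q; apply: G_even.
by apply: reflect_diff_ext => p; rewrite reflect_diffD.
Qed.

Lemma reflect_diff2_stepy (G : int -> int -> V) :
  (forall p q, G p (- q) = G p q) -> forall i j,
  reflect_diff2 G i (j - 1) + reflect_diff2 G i (j + 1)
    - (if j == -1 then reflect_diff2 G i 0 else 0)
  = reflect_diff2 (fun p q => G p (q - 1) + G p (q + 1)) i j.
Proof.
move=> G_even i j.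
by rewrite !(reflect_diff2_swap _ i) reflect_diff2_stepx // reflect_diff2_swap.
Qed.

Lemma reflect_diff_sum (I : Type) (r : seq I) (G : I -> int -> V) (i : int) :
  \sum_(l <- r) reflect_diff (G l) i = reflect_diff (fun p => \sum_(l <- r) G l p) i.
Proof. by rewrite /reflect_diff sumrB. Qed.

Lemma sum_step2 (f : nat -> V) (M : nat) :
  \sum_(i < M) (f i - f i.+2) = (f 0%N + f 1%N) - (f M + f M.+1).
Proof.
pose h i := - (f i + f i.+1).
have -> : \sum_(i < M) (f i - f i.+2) = \sum_(0 <= i < M) (h i.+1 - h i).
  by rewrite big_mkord; apply: eq_bigr => i _; rewrite /h opprK [RHS]addrC addrKA.
by rewrite telescope_sumr // /h opprK [LHS]addrC.
Qed.

Lemma sum_reflect_diff_box (n : nat) (g : int -> V) :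
  (forall r, n%:Z < r -> g r = 0) ->
  \sum_(k < (n.+1).*2.+1) reflect_diff g (box n k) = g 0 + g 1 *+ 2 + g 2.
Proof.
(* Split the box at the wall: the first n indices mirror the values
   |i + 1| = 1, ..., n, the remaining ones run through 0, ..., n + 2. *)
move=> g_out; rewrite (_ : (n.+1).*2.+1 = n + n.+3)%N; last by lia.
rewrite big_split_ord (reindex_inj rev_ord_inj) /=.
rewrite (eq_bigr (fun i : 'I_n => g (Posz i.+1) - g (Posz i.+3))); last first.
  move=> i _; rewrite /reflect_diff (_ : `|box n (n - i.+1) + 1| = Posz i.+1).
    by rewrite (_ : Posz i.+1 + 2 = Posz i.+3) //; lia.
  by have := ltn_ord i; rewrite /box; lia.
rewrite (eq_bigr (fun i : 'I_n.+3 => g (Posz i) - g (Posz i.+2))); last first.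
  move=> i _; rewrite /reflect_diff (_ : `|box n (n + i) + 1| = Posz i).
    by rewrite (_ : Posz i + 2 = Posz i.+2) //; lia.
  by rewrite /box; lia.
rewrite (sum_step2 (fun i => g (Posz i.+1))) (sum_step2 (fun i => g (Posz i))).
have [-> -> -> ->] : [/\ g n.+1 = 0, g n.+2 = 0, g n.+3 = 0 & g n.+4 = 0].
  by split; apply: g_out; lia.
rewrite !addr0 !subr0.
by rewrite addrC mulr2n !addrA.
Qed.
End Reflection.

Fixpoint line_walks (n : nat) (r : int) : rat :=
  match n with
  | 0 => (r == 0)%:R
  | n'.+1 => line_walks n' (r - 1) + line_walks n' (r + 1)
  end.

Lemma line_walksN (n : nat) (r : int) : line_walks n (- r) = line_walks n r.
Proof.
elim: n r => [|n IHn] r /=; first by rewrite oppr_eq0.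
have -> : - r - 1 = - (r + 1) by lia.
have -> : - r + 1 = - (r - 1) by lia.
by rewrite !IHn addrC.
Qed.

Lemma line_walks_out (n : nat) (r : int) : n%:Z < `|r| -> line_walks n r = 0.
Proof.
elim: n r => [|n IHn] r /= r_far; first by case: eqP => // r0; lia.
by rewrite !IHn ?addr0 //; lia.
Qed.

Lemma line_walks_ratio (n : nat) (r : int) :
  (n%:R + r%:~R + 2) * line_walks n (r + 2) = (n%:R - r%:~R) * line_walks n r.
Proof.
elim: n r => [|n IHn] r /=.
  rewrite add0r sub0r.
  have [->|r0] := eqVneq r 0; first by rewrite mulr0 mul0r.
  have [->|r2] := eqVneq r (-2).
    by rewrite mulr0 (_ : (-2)%:~R = -2 :> rat) // addNr mul0r.
  by case: eqP => [r2' | _]; [lia | rewrite !mulr0].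
have IHr1 := IHn (r + 1); have IHr := IHn (r - 1).
rewrite (_ : r + 1 + 2 = r + 2 + 1) in IHr1; last by lia.
rewrite (_ : r - 1 + 2 = r + 2 - 1) in IHr; last by lia.
rewrite (_ : r + 2 - 1 = r + 1) in IHr *; last by lia.
rewrite ?intrD ?intrB /= in IHr1 IHr.
rewrite (_ : 1%:~R = 1 :> rat) // (_ : (-1)%:~R = -1 :> rat) // in IHr1 IHr.
rewrite -natr1 !mulrDr.
have -> : (n%:R + 1 + r%:~R + 2) * line_walks n (r + 2 + 1)
          = (n%:R - (r%:~R + 1)) * line_walks n (r + 1).
  by rewrite -IHr1; congr (_ * _); ring.
have -> : (n%:R + 1 - r%:~R) * line_walks n (r - 1)
          = (n%:R + (r%:~R - 1) + 2) * line_walks n (r + 1).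
  by rewrite IHr; congr (_ * _); ring.
ring.
Qed.

Definition plane_walks (n : nat) (p q : int) : rat :=
  line_walks n (p + q) * line_walks n (p - q).

Lemma plane_walks0 (p q : int) : plane_walks 0 p q = ((p == 0) && (q == 0))%:R.
Proof.
rewrite /plane_walks /=.
by case: (p + q =P 0); case: (p - q =P 0); case: (p =P 0); case: (q =P 0);
  rewrite /= ?mul1r ?mul0r ?mulr0 // => *; lia.
Qed.

Lemma plane_walks_step (n : nat) (p q : int) :
  plane_walks n.+1 p q
  = (plane_walks n (p - 1) q + plane_walks n (p + 1) q)
    + (plane_walks n p (q - 1) + plane_walks n p (q + 1)).
Proof.
rewrite /plane_walks /=.
have -> : p - 1 + q = p + q - 1 by lia.
have -> : p - 1 - q = p - q - 1 by lia.
have -> : p + 1 + q = p + q + 1 by lia.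
have -> : p + 1 - q = p - q + 1 by lia.
have -> : p + (q - 1) = p + q - 1 by lia.
have -> : p - (q - 1) = p - q + 1 by lia.
have -> : p + (q + 1) = p + q + 1 by lia.
have -> : p - (q + 1) = p - q - 1 by lia.
ring.
Qed.

Lemma plane_walksNx (n : nat) (p q : int) : plane_walks n (- p) q = plane_walks n p q.
Proof.
rewrite /plane_walks.
have -> : - p + q = - (p - q) by lia.
have -> : - p - q = - (p + q) by lia.
by rewrite !line_walksN mulrC.
Qed.

Lemma plane_walksNy (n : nat) (p q : int) : plane_walks n p (- q) = plane_walks n p q.
Proof. by rewrite /plane_walks opprK mulrC. Qed.

Lemma plane_walks_out (n : nat) (p q : int) :
  n%:Z < `|p| \/ n%:Z < `|q| -> plane_walks n p q = 0.
Proof.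
move=> far; rewrite /plane_walks.
have [near|] := lerP `|p + q| n%:Z; last by move=> /line_walks_out ->; rewrite mul0r.
by rewrite [line_walks n (p - q)]line_walks_out ?mulr0 //; lia.
Qed.

Lemma Fcoef_reflection (n : nat) (i j : int) :
  Fcoef n i j = reflect_diff2 (plane_walks n) i j.
Proof.
elim: n i j => [|n IHn] i j /=.
  rewrite /reflect_diff2 /reflect_diff !plane_walks0 !normr_eq0 !addr_eq0.
  by case: (i == -1); case: (j == -1); rewrite ?andbF /= ?subr0.
rewrite !IHn (reflect_diff2_ext _ _ i j (plane_walks_step n)) reflect_diff2D.
rewrite -reflect_diff2_stepx; last exact: plane_walksNx.
rewrite -reflect_diff2_stepy; last exact: plane_walksNy.
by rewrite [RHS]addrACA !addrA.
Qed.

Definition profile (n : nat) (p : int) : rat :=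
  plane_walks n p 0 + plane_walks n p 1 *+ 2 + plane_walks n p 2.

(* Summing F_n over the box telescopes in both coordinates. *)
Lemma a_profile (n : nat) : a n = profile n 0 + profile n 1 *+ 2 + profile n 2.
Proof.
rewrite /a; under eq_bigr => k _.
  under eq_bigr => l _ do rewrite Fcoef_reflection.
  rewrite reflect_diff_sum (reflect_diff_ext _ (profile n)) => [|p]; last first.
    by apply: sum_reflect_diff_box => q q_far; apply: plane_walks_out; right; lia.
  over.
by apply: sum_reflect_diff_box => p p_far; rewrite /profile !plane_walks_out ?addr0 //; lia.
Qed.

Lemma plane_walks_nat (n s t : nat) :
  plane_walks n s t
  = line_walks n (s + t)%N * line_walks n (if (t <= s)%N then s - t else t - s)%N.
Proof.
rewrite /plane_walks PoszD; congr (_ * _).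
case: leqP => [le_ts|lt_st]; first by rewrite subzn.
by rewrite -line_walksN opprB subzn // ltnW.
Qed.

Lemma a_quadratic (m : nat) : a m =
  line_walks m 0 ^+ 2 + 4 * line_walks m 1 ^+ 2 + 2 * line_walks m 2 ^+ 2
  + 4 * line_walks m 0 * line_walks m 2 + 4 * line_walks m 1 * line_walks m 3
  + line_walks m 0 * line_walks m 4.
Proof. by rewrite a_profile /profile !plane_walks_nat /=; ring. Qed.

Lemma natr_addS_neq0 (m k : nat) : (m%:R + k.+1%:R : rat) != 0.
Proof. by rewrite -natrD pnatr_eq0 addnS. Qed.

Lemma line_walks_ratio_nat (m k : nat) :
  line_walks m k.+2 = (m%:R - k%:R) / (m%:R + k.+2%:R) * line_walks m k.
Proof.
have ratio := line_walks_ratio m k.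
rewrite (_ : Posz k + 2 = Posz k.+2) in ratio; last by lia.
rewrite (_ : m%:R + (Posz k)%:~R + 2 = m%:R + k.+2%:R :> rat) in ratio; last first.
  by rewrite -addrA -(addn2 k) natrD.
apply: (mulfI (natr_addS_neq0 m k.+1)); rewrite ratio.
by field; rewrite -!natrD pnatr_eq0; lia.
Qed.

Lemma line_walks_succ0 (m : nat) : line_walks m.+1 0 = 2 * line_walks m 1.
Proof. by rewrite /= sub0r add0r line_walksN mulr_natl mulr2n. Qed.

Lemma line_walks_succ1 (m : nat) :
  line_walks m.+1 1 = 2 * (m%:R + 1) / (m%:R + 2) * line_walks m 0.
Proof.
rewrite /= subrr (_ : 1 + 1 = 2 :> int) // (line_walks_ratio_nat m 0).
field; exact: natr_addS_neq0.
Qed.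

Lemma a_closed (m : nat) : a m =
  8 * (m%:R + 1) * (m%:R ^+ 2 + 4 * m%:R + 2) / ((m%:R + 2) ^+ 2 * (m%:R + 4))
    * line_walks m 0 ^+ 2
  + 8 * (m%:R + 1) / (m%:R + 3) * line_walks m 1 ^+ 2.
Proof.
rewrite a_quadratic (line_walks_ratio_nat m 2) (line_walks_ratio_nat m 1).
rewrite (line_walks_ratio_nat m 0).
by field; rewrite !natr_addS_neq0.
Qed.

Theorem mainTheorem5 (n : nat) :
  (n%:R + 2) * (n%:R + 4) * (n%:R + 6) * (n%:R ^+ 2 + 2 * n%:R - 1) * a n.+2
  - 4 * (n%:R + 3) * (2 * n%:R ^+ 3 + 9 * n%:R ^+ 2 + 4 * n%:R - 18) * a n.+1
  - 16 * (n%:R + 1) * (n%:R + 2) * (n%:R + 3) * (n%:R ^+ 2 + 4 * n%:R + 2) * a n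
  = 0 :> rat.
Proof.
rewrite !a_closed !(line_walks_succ0, line_walks_succ1).
by field; rewrite -!natrD [1 + _]addrC natr1 -natrD !pnatr_eq0; lia.
Qed.
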